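(* Let $F$ be a field, $\{E_1,\ldots,E_t\}$ a complete symmetric orthogonal set of idempotents in $F_{n\times n}$, and $\mathbf{z}=(z_1,\ldots,z_k)$ commuting variables. For $i=1,\ldots,t$ let $w_i(\mathbf{z})=\alpha_i\prod_{j=1}^kz_j^{t_{i,j}}$ with non-negative integers $t_{i,j}$ and $\alpha_i\in F$ satisfying $|\alpha_i|^2=1$. Then $W(\mathbf{z})=\sum_{i=1}^tw_i(\mathbf{z})E_i$ is a paraunitary matrix, i.e. $W(\mathbf{z})W^*(\mathbf{z}^{-1})=1$.
   Context: For $a\in\mathbb{C}$, $a^*=\overline a$; for other fields $a^*=a$; $|a|^2=aa^*$. For matrices, $^*$ is conjugate transpose over $\mathbb{C}$ and transpose otherwise; $W^*(\mathbf{z}^{-1})$ applies $^*$ to coefficients and replaces each $z_j$ by $z_j^{-1}$. A complete symmetric orthogonal set of idempotents is $\{E_1,\ldots,E_t\}$ with $E_i\ne 0$, $E_i^2=E_i$, $E_iE_j=0$ ($i\ne j$), $\sum_iE_i=I_n$ and $E_i^*=E_i$. *)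

From HB Require Import structures.
From mathcomp Require Import all_boot all_order all_algebra.
From mathcomp Require Import complex.
From mathcomp Require Import reals.
Set Implicit Arguments. Unset Strict Implicit. Unset Printing Implicit Defensive.
Import Order.TTheory GRing.Theory Num.Theory.
Local Open Scope ring_scope.

(* Matrix Laurent polynomials in k commuting variables z = (z_1,...,z_k)
   with coefficients in 'M[F]_n, represented as finite formal sums
   sum_m  c_m * z^(e_m)  given by a list of terms (e_m, c_m), where the
   exponent e_m : 'rV[int]_k may have negative entries. *)
Section Laurent.
Variables (F : fieldType) (k n : nat).

Definition lterm := ('rV[int]_k * 'M[F]_n)%type.
Definition lpoly := seq lterm.

Definition lcoef (P : lpoly) (e : 'rV[int]_k) : 'M[F]_n :=
  \sum_(x <- P | x.1 == e) x.2.

Definition lpeq (P Q : lpoly) : Prop := forall e, lcoef P e = lcoef Q e.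

Definition lpmul (P Q : lpoly) : lpoly :=
  [seq (x.1 + y.1, x.2 *m y.2) | x <- P, y <- Q].

Definition lpone : lpoly := [:: (0, 1%:M)].

Definition lpsum (m : nat) (a : 'I_m -> F) (e : 'I_m -> 'rV[int]_k)
  (A : 'I_m -> 'M[F]_n) : lpoly :=
  [seq (e i, a i *: A i) | i <- enum 'I_m].

Definition nexp (t : 'I_k -> nat) : 'rV[int]_k := \row_j (t j)%:Z.

Variable star : F -> F.

Definition mxstar (A : 'M[F]_n) : 'M[F]_n := (map_mx star A)^T.

(* W^*(z^{-1}) : apply ^* to the coefficients and replace z_j by z_j^{-1} *)
Definition lpstar_inv (P : lpoly) : lpoly :=
  [seq (- x.1, mxstar x.2) | x <- P].

Definition paraunitary (W : lpoly) : Prop :=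
  lpeq (lpmul W (lpstar_inv W)) lpone.

Definition csos (t : nat) (E : 'I_t -> 'M[F]_n) : Prop :=
  [/\ forall i, E i != 0,
      forall i, E i *m E i = E i,
      forall i j, i != j -> E i *m E j = 0,
      \sum_(i < t) E i = 1%:M
    & forall i, mxstar (E i) = E i].

End Laurent.

From HB Require Import structures.
From mathcomp Require Import all_boot all_order all_algebra.
From mathcomp Require Import complex.
From mathcomp Require Import reals.
Import Order.TTheory GRing.Theory Num.Theory.
Local Open Scope ring_scope.

(* Expanding W(z) W^*(z^-1) gives sum_(i,j) alpha_i alpha_j^* E_i E_j^* z^(e_i - e_j);
   since E_j^* = E_j and the E_i are orthogonal idempotents, only the diagonal
   terms i = j survive, each equal to |alpha_i|^2 E_i = E_i at exponent 0, and
   these add up to the identity. *)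

Section Paraunitary.
Variables (F : fieldType) (k n : nat) (star : F -> F).

Lemma mxstarZ (star_mul : {morph star : a b / a * b}) a (A : 'M[F]_n) :
  mxstar star (a *: A) = star a *: mxstar star A.
Proof. by apply/matrixP => i j; rewrite !mxE star_mul. Qed.

Lemma lcoef_lpmul_lpsum_star t (a : 'I_t -> F) (e : 'I_t -> 'rV[int]_k)
    (A : 'I_t -> 'M[F]_n) f :
  lcoef (lpmul (lpsum a e A) (lpstar_inv star (lpsum a e A))) f =
  \sum_(i < t) \sum_(j < t)
    (if e i - e j == f then a i *: A i *m mxstar star (a j *: A j) else 0).
Proof.
rewrite /lcoef /lpmul /lpstar_inv /lpsum big_mkcond big_allpairs_dep /=.
rewrite big_map big_enum /=; apply: eq_bigr => i _.
by rewrite big_map big_map big_enum.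
Qed.

Lemma paraunitary_lpsum t (E : 'I_t -> 'M[F]_n) (alpha : 'I_t -> F)
    (e : 'I_t -> 'rV[int]_k) :
  {morph star : a b / a * b} -> csos star E ->
  (forall i, alpha i * star (alpha i) = 1) ->
  paraunitary star (lpsum alpha e E).
Proof.
move=> star_mul [_ E_idem E_orth E_sum E_star] alpha_unit f.
have termE i j : alpha i *: E i *m mxstar star (alpha j *: E j) =
    if i == j then E i else 0.
  rewrite mxstarZ // E_star -scalemxAl -scalemxAr.
  have [<-|neq_ij] := eqVneq i j; first by rewrite E_idem scalerA alpha_unit scale1r.
  by rewrite E_orth // !scaler0.
rewrite lcoef_lpmul_lpsum_star /lcoef /lpone big_cons big_nil /= addr0.
under eq_bigr => i _.
  rewrite (bigD1 i) //= termE eqxx big1 ?addr0; last first.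
    by move=> j neq_ji; rewrite termE [i == j]eq_sym (negPf neq_ji); case: ifP.
  rewrite subrr; over.
by case: eqP => _; [exact: E_sum | exact: big1_eq].
Qed.

End Paraunitary.

Theorem proposition14 :
  (forall (F : fieldType) (n t k : nat) (E : 'I_t -> 'M[F]_n)
     (alpha : 'I_t -> F) (tt : 'I_t -> 'I_k -> nat),
     csos id E ->
     (forall i, alpha i * alpha i = 1) ->
     paraunitary id (lpsum alpha (fun i => nexp (tt i)) E))
  /\
  (forall (R : realType) (n t k : nat) (E : 'I_t -> 'M[R[i]]_n)
     (alpha : 'I_t -> R[i]) (tt : 'I_t -> 'I_k -> nat),
     csos Num.conj E ->
     (forall i, alpha i * Num.conj (alpha i) = 1) ->
     paraunitary Num.conj (lpsum alpha (fun i => nexp (tt i)) E)).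
Proof.
split=> R n t k E alpha tt; apply: paraunitary_lpsum => //.
exact: rmorphM.
Qed.
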